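(* For $n\ge1$, $m(W_n)=\frac{(n-1)n(n+1)}{6}$ and $m(M_n)=0$; moreover $\frac{(n-1)n(n+1)}{6}$ equals the number of meet-irreducible elements of $(\mathcal{Q}_n,\le)$.
   Context: $L_n=\{0,\dots,n\}$. For a map $Q:L_n\times L_n\to\mathbb{R}$ write $|Q|=\sum_{i,j=1}^{n}Q(i,j)$. $M_n(i,j)=\min\{i,j\}$ and $W_n(i,j)=\max\{i+j-n,0\}$, and $m(Q)=|M_n|-|Q|$. $\mathcal{Q}_n$ is the set of irreducible discrete quasi-copulas: maps $Q:L_n\times L_n\to L_n$ (onto) with $Q(i,0)=Q(0,i)=0$, $Q(i,n)=Q(n,i)=i$, non-decreasing in each argument, and $Q(i,j)+Q(i',j')\ge Q(i,j')+Q(i',j)$ whenever $i\le i'$, $j\le j'$ and one of $i,i',j,j'$ lies in $\{0,n\}$; ordered by $P\le Q$ iff $P(i,j)\le Q(i,j)$ for all $i,j$. An element $z$ of a finite poset is meet-irreducible if it is not the maximum and $z=x\wedge y$ implies $z=x$ or $z=y$. *)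

From mathcomp Require Import all_boot all_order all_algebra.
Set Implicit Arguments. Unset Strict Implicit. Unset Printing Implicit Defensive.

(* L_n = {0,...,n} is 'I_n.+1 ; a map L_n x L_n -> L_n is a finite function. *)
Definition qmap (n : nat) := {ffun 'I_n.+1 * 'I_n.+1 -> 'I_n.+1}.

Definition absQ (n : nat) (Q : nat -> nat -> nat) : nat :=
  \sum_(1 <= i < n.+1) \sum_(1 <= j < n.+1) Q i j.

Definition Mn (n : nat) (i j : nat) : nat := minn i j.
Definition Wn (n : nat) (i j : nat) : nat := (i + j) - n. (* = max(i+j-n,0) *)

Definition mQ (n : nat) (Q : nat -> nat -> nat) : int :=
  (absQ n (Mn n))%:Z - (absQ n Q)%:Z.

Definition qfun (n : nat) (Q : qmap n) (i j : 'I_n.+1) : nat := val (Q (i, j)).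

(* irreducible discrete quasi-copulas *)
Definition isQ (n : nat) (Q : qmap n) : bool :=
  [&& [forall k : 'I_n.+1, exists ij : 'I_n.+1 * 'I_n.+1, Q ij == k],
      [forall i : 'I_n.+1, (qfun Q i ord0 == 0) && (qfun Q ord0 i == 0)],
      [forall i : 'I_n.+1, (qfun Q i ord_max == i) && (qfun Q ord_max i == i)],
      [forall i : 'I_n.+1, forall i' : 'I_n.+1, forall j : 'I_n.+1,
         (i <= i') ==> (qfun Q i j <= qfun Q i' j) && (qfun Q j i <= qfun Q j i')] &
      [forall i : 'I_n.+1, forall i' : 'I_n.+1, forall j : 'I_n.+1, forall j' : 'I_n.+1,
         [&& i <= i', j <= j' &
            [|| i == ord0, i == ord_max, i' == ord0, i' == ord_max,
                j == ord0, j == ord_max, j' == ord0 | j' == ord_max]] ==>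
         (qfun Q i j' + qfun Q i' j <= qfun Q i j + qfun Q i' j')]].

Definition leQ (n : nat) (P Q : qmap n) : bool :=
  [forall ij : 'I_n.+1 * 'I_n.+1, P ij <= Q ij].

Definition is_meetQ (n : nat) (x y z : qmap n) : bool :=
  [&& isQ z, leQ z x, leQ z y &
      [forall w : qmap n, (isQ w && leQ w x && leQ w y) ==> leQ w z]].

Definition is_maxQ (n : nat) (z : qmap n) : bool :=
  [forall w : qmap n, isQ w ==> leQ w z].

Definition meet_irrQ (n : nat) (z : qmap n) : bool :=
  [&& isQ z, ~~ is_maxQ z &
      [forall x : qmap n, forall y : qmap n,
         [&& isQ x, isQ y & is_meetQ x y z] ==> (z == x) || (z == y)]].

From mathcomp Require Import all_boot all_order all_algebra.
From mathcomp Require Import zify.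
Set Implicit Arguments. Unset Strict Implicit. Unset Printing Implicit Defensive.

(* Both m(W_n) and the number of meet-irreducible elements of Q_n count the
   triples (a, b, v) with W_n(a, b) <= v < M_n(a, b), and there are
   sum_(a, b) (M_n - W_n)(a, b) = C(n+1, 3) of them.  The elements of Q_n are
   the maps with the boundary values of a copula that are nondecreasing and
   1-Lipschitz in each variable, so meets are pointwise minima.  For each
   triple, the largest element of Q_n with value at most v at (a, b) is
   meet-irreducible, and distinct triples give distinct elements.  Conversely
   every z in Q_n is the meet of these largest elements over its own values
   z(a, b), so a meet-irreducible z must be one of them. *)

Lemma sum_indicator_range k a b :
  \sum_(v < k) (a <= v < b) = minn k b - minn k a.
Proof.
elim: k => [|k IHk]; first by rewrite big_ord0 !min0n.
by rewrite big_ord_recr /= IHk; case: (leqP a k); case: (ltnP k b) => /=; lia.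
Qed.

Definition gapMW n := \sum_(i < n.+1) \sum_(j < n.+1) (minn i j - (i + j - n)).

Lemma gapMW_row n i : i <= n ->
  \sum_(j < n.+1) (minn i j - (i + j - n)) = i * (n - i).
Proof.
move=> le_in.
(* Count the pairs (j, v) with i + j - n <= v < minn i j by v first:
   each v < i admits exactly n - i values of j. *)
transitivity (\sum_(j < n.+1) \sum_(v < i) (i + j - n <= v < j)).
  by apply: eq_bigr => j _; rewrite sum_indicator_range; have := ltn_ord j; lia.
rewrite exchange_big (eq_bigr (fun=> n - i)) ?sum_nat_const ?card_ord // => v _.
transitivity (\sum_(j < n.+1) (v.+1 <= j < (v + (n - i)).+1)).
  by apply: eq_bigr => j _; congr nat_of_bool; apply/idP/idP; have := ltn_ord j; lia.
by rewrite sum_indicator_range; have := ltn_ord v; lia.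
Qed.

Lemma sum_mul_subn n : \sum_(i < n.+1) i * (n - i) = 'C(n.+1, 3).
Proof.
elim: n => [|n IHn]; first by rewrite big_ord1.
rewrite big_ord_recr /= subnn muln0 addn0 binS -IHn -bin2_sum big_mkord -big_split.
by apply: eq_bigr => i _; rewrite subSn ?mulnSr // -ltnS.
Qed.

Lemma bin3_div n : 'C(n.+1, 3) = (n.-1 * n * n.+1) %/ 6.
Proof. by rewrite bin_ffactd !ffactnS ffactn0 muln1 mulnC (mulnC n). Qed.

Lemma absQ_ord n (Q : nat -> nat -> nat) :
  (forall k, k <= n -> Q 0 k = 0 /\ Q k 0 = 0) ->
  absQ n Q = \sum_(i < n.+1) \sum_(j < n.+1) Q i j.
Proof.
move=> Q0; transitivity (\sum_(0 <= i < n.+1) \sum_(0 <= j < n.+1) Q i j); last first.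
  by rewrite big_mkord; apply: eq_bigr => i _; rewrite big_mkord.
rewrite [RHS](big_ltn (ltn0Sn n)) big1_seq ?add0n; last first.
  by move=> j /[!mem_index_iota] /andP[_]; rewrite ltnS => /Q0[].
apply: eq_big_nat => i /andP[_]; rewrite ltnS => le_in.
by rewrite (big_ltn (ltn0Sn n)) (proj2 (Q0 i le_in)).
Qed.

Lemma absQ_Mn n : absQ n (Mn n) = absQ n (Wn n) + gapMW n.
Proof.
rewrite !absQ_ord /Mn /Wn => [|k|k]; try lia.
rewrite /gapMW -big_split; apply: eq_bigr => i _; rewrite -big_split.
by apply: eq_bigr => j _ /=; have := ltn_ord i; have := ltn_ord j; lia.
Qed.

Lemma mQ_Wn n : mQ n (Wn n) = Posz (gapMW n).
Proof. by rewrite /mQ absQ_Mn PoszD GRing.addrAC GRing.subrr GRing.add0r. Qed.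

Lemma gapMW_bin n : gapMW n = 'C(n.+1, 3).
Proof. by rewrite -sum_mul_subn; apply: eq_bigr => i _; exact: gapMW_row (leq_ord i). Qed.

Section QuasiCopulas.
Variable n : nat.

Definition qval (Q : qmap n) (i j : nat) : nat := val (Q (inord i, inord j)).

Definition qmap_of (g : nat -> nat -> nat) : qmap n :=
  [ffun ij : 'I_n.+1 * 'I_n.+1 => inord (g ij.1 ij.2)].

(* Given the boundary values, the rectangle inequality with a corner on the
   boundary of L_n x L_n amounts to monotonicity and the 1-Lipschitz bounds. *)
Definition quasi_copula (g : nat -> nat -> nat) :=
  (forall k, k <= n -> [/\ g k 0 = 0, g 0 k = 0, g k n = k & g n k = k]) /\
  (forall i i' j, i <= i' -> i' <= n -> j <= n ->
     [/\ g i j <= g i' j, g j i <= g j i', g i' j <= g i j + (i' - i)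
       & g j i' <= g j i + (i' - i)]).

Lemma quasi_copula_le_min g i j :
  quasi_copula g -> i <= n -> j <= n -> g i j <= minn i j.
Proof.
move=> [bound mono] le_in le_jn.
have [_ _ gin _] := bound i le_in; have [_ _ _ gnj] := bound j le_jn.
have [_ + _ _] := mono j n i le_jn (leqnn n) le_in.
have [+ _ _ _] := mono i n j le_in (leqnn n) le_jn.
lia.
Qed.

Lemma quasi_copula_ge_W g i j :
  quasi_copula g -> i <= n -> j <= n -> i + j - n <= g i j.
Proof.
move=> [bound mono] le_in le_jn.
have [_ _ _ +] := mono j n i le_jn (leqnn n) le_in.
have [_ _ gin _] := bound i le_in.
lia.
Qed.

Lemma qval_of g i j :
  quasi_copula g -> i <= n -> j <= n -> qval (qmap_of g) i j = g i j.
Proof.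
move=> Cg le_in le_jn; rewrite /qval ffunE /= !inordK ?ltnS //.
exact: leq_trans (quasi_copula_le_min Cg le_in le_jn) (leq_trans (geq_minl _ _) le_in).
Qed.

Lemma qfunE (Q : qmap n) (i j : 'I_n.+1) : qfun Q i j = qval Q i j.
Proof. by rewrite /qval !inord_val. Qed.

Lemma leQP (P Q : qmap n) :
  reflect (forall i j, i <= n -> j <= n -> qval P i j <= qval Q i j) (leQ P Q).
Proof.
apply: (iffP forallP) => [lePQ i j _ _ | lePQ [i j]]; first exact: lePQ.
by have := lePQ i j (leq_ord i) (leq_ord j); rewrite /qval !inord_val.
Qed.

Lemma leQ_trans : transitive (@leQ n).
Proof.
move=> Q P R /forallP lePQ /forallP leQR; apply/forallP => ij.
exact: leq_trans (lePQ ij) (leQR ij).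
Qed.

Lemma leQ_anti (P Q : qmap n) : leQ P Q -> leQ Q P -> P = Q.
Proof.
move=> /forallP lePQ /forallP leQP; apply/ffunP => ij; apply/val_inj.
by apply/eqP; rewrite eqn_leq lePQ leQP.
Qed.

Lemma isQ_quasi_copula (Q : qmap n) : isQ Q -> quasi_copula (qval Q).
Proof.
case/and5P=> _ /forallP Q0 /forallP Qn /forallP Qmono /forallP Qrect.
have inordE k : k <= n -> (inord k : 'I_n.+1) = k :> nat.
  by move=> le_kn; rewrite inordK.
have bound k : k <= n ->
    [/\ qval Q k 0 = 0, qval Q 0 k = 0, qval Q k n = k & qval Q n k = k].
  move=> le_kn; have /andP[/eqP Qk0 /eqP Q0k] := Q0 (inord k).
  have /andP[/eqP Qkn /eqP Qnk] := Qn (inord k).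
  by move: Qk0 Q0k Qkn Qnk; rewrite !qfunE /= !inordE.
split=> // i i' j le_ii' le_i'n le_jn; have le_in := leq_trans le_ii' le_i'n.
have := forallP (forallP (Qmono (inord i)) (inord i')) (inord j).
rewrite !qfunE !inordE // le_ii' => /andP[mono1 mono2].
have := forallP (forallP (forallP (Qrect (inord i)) (inord i')) (inord j)) ord_max.
rewrite !qfunE !inordE //= le_ii' le_jn eqxx !orbT /= => lip1.
have := forallP (forallP (forallP (Qrect (inord j)) ord_max) (inord i)) (inord i').
rewrite !qfunE !inordE //= le_ii' le_jn eqxx !orbT /= => lip2.
have [_ _ Qin Qni] := bound i le_in; have [_ _ Qi'n Qni'] := bound i' le_i'n.
have [_ _ Qjn Qnj] := bound j le_jn.
split=> //; lia.
Qed.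

Lemma quasi_copula_rect g i i' j j' : quasi_copula g ->
  i <= i' -> i' <= n -> j <= j' -> j' <= n ->
  [|| i == 0, i == n, i' == 0, i' == n, j == 0, j == n, j' == 0 | j' == n] ->
  g i j' + g i' j <= g i j + g i' j'.
Proof.
move=> [bound mono] le_ii' le_i'n le_jj' le_j'n on_boundary.
have le_in : i <= n by lia. have le_jn : j <= n by lia.
have [g_ij' _ _ _] := mono i i' j' le_ii' le_i'n le_j'n.
have [_ g_i'j _ _] := mono j j' i' le_jj' le_j'n le_i'n.
have [_ _ lip_i _] := mono i i' j le_ii' le_i'n le_jn.
have [_ _ _ lip_j] := mono j j' i le_jj' le_j'n le_in.
have [gi0 _ gin _] := bound i le_in; have [gi'0 _ gi'n _] := bound i' le_i'n.
have [_ g0j _ gnj] := bound j le_jn; have [_ g0j' _ gnj'] := bound j' le_j'n.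
have [->|[->|[->|->]]] : i = 0 \/ i' = n \/ j = 0 \/ j' = n by lia.
all: lia.
Qed.

Lemma quasi_copula_isQ g : quasi_copula g -> isQ (qmap_of g).
Proof.
move=> Cg; have [bound mono] := Cg.
have qvalE (i j : 'I_n.+1) : qfun (qmap_of g) i j = g i j.
  by rewrite qfunE qval_of ?leq_ord.
apply/and5P; split.
- apply/forallP => k; apply/existsP; exists (k, ord_max); apply/eqP/val_inj.
  change (qfun (qmap_of g) k ord_max = k); rewrite qvalE /=.
  by have [] := bound k (leq_ord k).
- apply/forallP => k; rewrite !qvalE /=.
  by have [gk0 g0k _ _] := bound k (leq_ord k); rewrite gk0 g0k.
- apply/forallP => k; rewrite !qvalE /=.
  by have [_ _ gkn gnk] := bound k (leq_ord k); rewrite gkn gnk eqxx.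
- apply/forallP => i; apply/forallP => i'; apply/forallP => j; apply/implyP => le_ii'.
  by rewrite !qvalE; have [-> -> _ _] := mono i i' j le_ii' (leq_ord i') (leq_ord j).
do 4 apply/forallP => ?; apply/implyP => /and3P[le_ii' le_jj' on_boundary].
by rewrite !qvalE; apply: quasi_copula_rect; rewrite ?leq_ord.
Qed.

Lemma quasi_copula_min g h :
  quasi_copula g -> quasi_copula h -> quasi_copula (fun i j => minn (g i j) (h i j)).
Proof.
move=> [gbound gmono] [hbound hmono]; split=> [k le_kn | i i' j le_ii' le_i'n le_jn].
  have [-> -> -> ->] := gbound k le_kn; have [-> -> -> ->] := hbound k le_kn.
  by rewrite !minnn.
have [g1 g2 g3 g4] := gmono i i' j le_ii' le_i'n le_jn.
have [h1 h2 h3 h4] := hmono i i' j le_ii' le_i'n le_jn.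
split; lia.
Qed.

Definition qmeet (x y : qmap n) := qmap_of (fun i j => minn (qval x i j) (qval y i j)).

Lemma quasi_copula_qmeet x y :
  isQ x -> isQ y -> quasi_copula (fun i j => minn (qval x i j) (qval y i j)).
Proof. by move=> Qx Qy; apply: quasi_copula_min; apply: isQ_quasi_copula. Qed.

Lemma is_meetQ_qmeet x y : isQ x -> isQ y -> is_meetQ x y (qmeet x y).
Proof.
move=> Qx Qy; have Cxy := quasi_copula_qmeet Qx Qy.
apply/and4P; split; first exact: quasi_copula_isQ.
- by apply/leQP => i j le_in le_jn; rewrite qval_of // geq_minl.
- by apply/leQP => i j le_in le_jn; rewrite qval_of // geq_minr.
apply/forallP => w; apply/implyP => /andP[/andP[_ /leQP le_wx] /leQP le_wy].
by apply/leQP => i j le_in le_jn; rewrite qval_of // leq_min le_wx ?le_wy.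
Qed.

Lemma is_meetQ_eq x y z : isQ x -> isQ y -> is_meetQ x y z -> z = qmeet x y.
Proof.
move=> Qx Qy /and4P[_ /leQP le_zx /leQP le_zy /forallP glb].
have /and4P[Qxy le_xyx le_xyy _] := is_meetQ_qmeet Qx Qy.
apply: leQ_anti; last by have /implyP := glb (qmeet x y); apply; rewrite Qxy le_xyx.
apply/leQP => i j le_in le_jn; rewrite (qval_of (quasi_copula_qmeet Qx Qy)) // leq_min.
by rewrite le_zx ?le_zy.
Qed.

(* The largest quasi-copula with value at most [v] at [(a, b)]: the Lipschitz
   bounds propagated from [(a, b)], capped by M_n. *)
Definition peak (a b v : nat) (k l : nat) := minn (minn k l) (v + (k - a) + (l - b)).

Lemma quasi_copula_peak a b v :
  a <= n -> b <= n -> a + b - n <= v -> quasi_copula (peak a b v).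
Proof. by rewrite /peak => *; split=> *; split; lia. Qed.

Lemma peak_at a b v : v <= minn a b -> peak a b v a b = v.
Proof. rewrite /peak; lia. Qed.

Lemma peak_minn a b k l : peak a b (minn a b) k l = minn k l.
Proof. rewrite /peak; lia. Qed.

Lemma quasi_copula_le_peak g a b k l : quasi_copula g ->
  a <= n -> b <= n -> k <= n -> l <= n -> g k l <= peak a b (g a b) k l.
Proof.
move=> Cg le_an le_bn le_kn le_ln; have [_ mono] := Cg.
have le_ka : maxn k a <= n by rewrite geq_max le_kn.
have le_lb : maxn l b <= n by rewrite geq_max le_ln.
have [g1 _ _ _] := mono k (maxn k a) l (leq_maxl _ _) le_ka le_ln.
have [_ g2 _ _] := mono l (maxn l b) (maxn k a) (leq_maxl _ _) le_lb le_ka.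
have [_ _ g3 _] := mono a (maxn k a) (maxn l b) (leq_maxr _ _) le_ka le_lb.
have [_ _ _ g4] := mono b (maxn l b) a (leq_maxr _ _) le_lb le_an.
have := quasi_copula_le_min Cg le_kn le_ln.
rewrite /peak; lia.
Qed.

Definition qtop := qmap_of minn.

Lemma quasi_copula_minn : quasi_copula minn.
Proof. by split=> *; split; lia. Qed.

Lemma is_maxQ_qtop : is_maxQ qtop.
Proof.
apply/forallP => w; apply/implyP => /isQ_quasi_copula Cw.
apply/leQP => i j le_in le_jn.
by rewrite (qval_of quasi_copula_minn) // quasi_copula_le_min.
Qed.

Lemma meet_irrQ_peak a b v : a <= n -> b <= n -> a + b - n <= v -> v < minn a b ->
  meet_irrQ (qmap_of (peak a b v)).
Proof.
move=> le_an le_bn le_v lt_v; have Cp := quasi_copula_peak le_an le_bn le_v.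
have pv : qval (qmap_of (peak a b v)) a b = v by rewrite qval_of // peak_at // ltnW.
have below w : isQ w -> leQ (qmap_of (peak a b v)) w -> qval w a b <= v ->
    qmap_of (peak a b v) == w.
  move=> /isQ_quasi_copula Cw le_pw le_wv; apply/eqP/leQ_anti; first exact: le_pw.
  apply/leQP => i j le_in le_jn; rewrite qval_of //.
  apply: leq_trans (quasi_copula_le_peak Cw le_an le_bn le_in le_jn) _.
  by rewrite /peak leq_min geq_minl /=; lia.
apply/and3P; split; first exact: quasi_copula_isQ.
  apply/negP => /forallP /(_ qtop) /implyP /(_ (quasi_copula_isQ quasi_copula_minn)).
  move=> /leQP /(_ a b le_an le_bn).
  by rewrite pv (qval_of quasi_copula_minn) // leqNgt lt_v.
apply/forallP => x; apply/forallP => y; apply/implyP => /and3P[Qx Qy meet_xy].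
have /and4P[_ le_zx le_zy _] := meet_xy.
have := congr1 (fun Q => qval Q a b) (is_meetQ_eq Qx Qy meet_xy).
rewrite /= pv (qval_of (quasi_copula_qmeet Qx Qy)) //= => eq_v.
case: (leqP (qval x a b) (qval y a b)) => [/minn_idPl | /ltnW/minn_idPr] min_xy.
  by apply/orP; left; apply: below => //; rewrite eq_v min_xy.
by apply/orP; right; apply: below => //; rewrite eq_v min_xy.
Qed.

Lemma isQ_foldr_qmeet (s : seq (qmap n)) :
  all (@isQ n) s -> isQ (foldr qmeet qtop s).
Proof.
elim: s => [|x s IHs] /=; first by move=> _; exact: quasi_copula_isQ quasi_copula_minn.
by case/andP=> Qx /IHs Qs; have /and4P[] := is_meetQ_qmeet Qx Qs.
Qed.

Lemma foldr_qmeet_le (s : seq (qmap n)) x :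
  all (@isQ n) s -> x \in s -> leQ (foldr qmeet qtop s) x.
Proof.
elim: s => [|y s IHs] //= /andP[Qy Qs].
have /and4P[_ le_y le_s _] := is_meetQ_qmeet Qy (isQ_foldr_qmeet Qs).
by rewrite inE => /orP[/eqP -> // | x_s]; apply: leQ_trans le_s (IHs Qs x_s).
Qed.

Lemma le_foldr_qmeet w (s : seq (qmap n)) :
  isQ w -> all (@isQ n) s -> all (leQ w) s -> leQ w (foldr qmeet qtop s).
Proof.
move=> Qw; elim: s => [|x s IHs] /=.
  by move=> _ _; have /forallP/(_ w)/implyP := is_maxQ_qtop; apply.
case/andP=> Qx Qs /andP[le_wx le_ws].
have /and4P[_ _ _ /forallP glb] := is_meetQ_qmeet Qx (isQ_foldr_qmeet Qs).
by have /implyP := glb w; apply; rewrite Qw le_wx IHs.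
Qed.

Lemma meet_irrQ_mem_foldr z (s : seq (qmap n)) :
  meet_irrQ z -> all (@isQ n) s -> foldr qmeet qtop s = z -> z \in s.
Proof.
case/and3P=> _ not_max /forallP irr; elim: s => [|x s IHs] /=.
  by move=> _ top_z; rewrite -top_z is_maxQ_qtop in not_max.
case/andP=> Qx Qs meet_z; have QF := isQ_foldr_qmeet Qs.
have meet_xs : is_meetQ x (foldr qmeet qtop s) z.
  by rewrite -meet_z; exact: is_meetQ_qmeet.
have /forallP/(_ (foldr qmeet qtop s))/implyP := irr x.
rewrite Qx QF meet_xs inE => /(_ isT) /orP[-> // | /eqP z_s].
by rewrite IHs ?orbT // -z_s.
Qed.

Lemma meet_irrQ_eq_peak z : meet_irrQ z -> exists a b,
  [/\ a <= n, b <= n, a + b - n <= qval z a b, qval z a b < minn a b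
     & z = qmap_of (peak a b (qval z a b))].
Proof.
move=> irr_z; have /and3P[Qz not_max _] := irr_z; have Cz := isQ_quasi_copula Qz.
pose U (p : 'I_n.+1 * 'I_n.+1) := qmap_of (peak p.1 p.2 (qval z p.1 p.2)).
have CU (p : 'I_n.+1 * 'I_n.+1) : quasi_copula (peak p.1 p.2 (qval z p.1 p.2)).
  exact: quasi_copula_peak (leq_ord _) (leq_ord _)
    (quasi_copula_ge_W Cz (leq_ord _) (leq_ord _)).
have QU : all (@isQ n) (codom U).
  by apply/allP => _ /codomP[p ->]; exact: quasi_copula_isQ.
have z_le_U : all (leQ z) (codom U).
  apply/allP => _ /codomP[p ->]; apply/leQP => i j le_in le_jn.
  by rewrite qval_of // quasi_copula_le_peak ?leq_ord.
have meet_U : foldr qmeet qtop (codom U) = z.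
  apply: leQ_anti; last exact: le_foldr_qmeet.
  apply/leQP => i j le_in le_jn.
  have /leQP/(_ i j le_in le_jn) := foldr_qmeet_le QU (codom_f U (inord i, inord j)).
  rewrite (qval_of (CU (inord i, inord j))) //= !inordK ?ltnS // peak_at //.
  exact: quasi_copula_le_min.
have /codomP[[a b] z_eq] := meet_irrQ_mem_foldr irr_z QU meet_U.
exists a, b; split; rewrite ?leq_ord //.
  exact: quasi_copula_ge_W Cz (leq_ord a) (leq_ord b).
rewrite ltn_neqAle quasi_copula_le_min ?leq_ord // andbT.
apply: contraNneq not_max => z_min.
suff -> : z = qtop by exact: is_maxQ_qtop.
by rewrite {1}z_eq /U /= z_min; apply/ffunP => ij; rewrite !ffunE peak_minn.
Qed.

Definition peak_index := [set t : 'I_n.+1 * 'I_n.+1 * 'I_n.+1 |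
  t.1.1 + t.1.2 - n <= t.2 < minn t.1.1 t.1.2].

Definition peak_of (t : 'I_n.+1 * 'I_n.+1 * 'I_n.+1) :=
  qmap_of (peak t.1.1 t.1.2 t.2).

Lemma meet_irrQ_setE : [set z | meet_irrQ z] = peak_of @: peak_index.
Proof.
apply/setP => z; rewrite inE; apply/idP/imsetP => [/meet_irrQ_eq_peak | [t]].
  case=> a [b [le_an le_bn le_v lt_v ->]].
  have le_vn : qval z a b <= n by lia.
  exists ((inord a, inord b), inord (qval z a b)); last by rewrite /peak_of /= !inordK.
  by rewrite inE /= !inordK ?ltnS // le_v.
rewrite inE => /andP[le_v lt_v] ->.
exact: meet_irrQ_peak (leq_ord _) (leq_ord _) le_v lt_v.
Qed.

Lemma peak_of_inj : {in peak_index &, injective peak_of}.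
Proof.
move=> [[a b] v] [[a' b'] v']; rewrite !inE /= => /andP[le_v lt_v] /andP[le_v' lt_v'].
have C := quasi_copula_peak (leq_ord a) (leq_ord b) le_v.
have C' := quasi_copula_peak (leq_ord a') (leq_ord b') le_v'.
move=> eq_peak; have := congr1 (fun Q => qval Q a b) eq_peak.
have := congr1 (fun Q => qval Q a' b') eq_peak.
rewrite /peak_of /= !qval_of ?leq_ord // !peak_at; try exact: ltnW.
rewrite /peak => eq1 eq2.
have ea : a = a' by apply: ord_inj; lia.
have eb : b = b' by apply: ord_inj; lia.
have ev : v = v' by apply: ord_inj; lia.
by rewrite ea eb ev.
Qed.

Lemma card_peak_index : #|peak_index| = gapMW n.
Proof.
rewrite -sum1_card big_mkcond /=.
transitivity
  (\sum_(i < n.+1) \sum_(j < n.+1) \sum_(v < n.+1) (i + j - n <= v < minn i j)).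
  by rewrite pair_bigA /= pair_bigA /=; apply: eq_bigr => -[[i j] v] _; rewrite inE.
apply: eq_bigr => i _; apply: eq_bigr => j _; rewrite sum_indicator_range.
by have := leq_ord i; have := leq_ord j; lia.
Qed.

Lemma card_meet_irrQ : #|[set z : qmap n | meet_irrQ z]| = gapMW n.
Proof.
by rewrite meet_irrQ_setE card_in_imset ?card_peak_index //; exact: peak_of_inj.
Qed.

End QuasiCopulas.

Theorem mainTheorem12 (n : nat) (hn : 1 <= n) :
  [/\ mQ n (Wn n) = Posz ((n.-1 * n * n.+1) %/ 6),
      mQ n (Mn n) = Posz 0 &
      (n.-1 * n * n.+1) %/ 6 = #|[set z : qmap n | meet_irrQ z]|].
Proof.
rewrite -bin3_div -gapMW_bin; split.
- exact: mQ_Wn.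
- by rewrite /mQ GRing.subrr.
- by rewrite card_meet_irrQ.
Qed.
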